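(* Let $\mathfrak{R}$ be a complete rewriting system on $\Sigma$ and let $(w,r_1,r_2)$ be a triple, where $\ell_1$ and $\ell_2$ denote the left-hand sides of the rules $r_1$ and $r_2$ respectively. If $\mathrm{pre}(\ell_2)\cap\mathrm{suf}(\ell_1)=\emptyset$ or $\mathrm{pre}(\ell_1)\cap\mathrm{suf}(\ell_2)=\emptyset$, then the triple $(w,r_1,r_2)$ is $\tilde c$-defined.
   Context: $\Sigma^*$ is the free monoid on $\Sigma$; a rewriting system is a set of rules $l\to r$ with $l,r\in\Sigma^*$, complete meaning terminating and confluent; a rule $l\to r$ can be applied to a word if $l$ is a subword (factor) of it. A triple $(w,r_1,r_2)$ consists of a word $w$ and rules $r_1,r_2\in\mathfrak{R}$ such that $r_1$ can be applied to some cyclic conjugate of $w$ and $r_2$ can be applied to some (possibly different) cyclic conjugate of $w$ (cyclic conjugates taken in $\Sigma^*$: $ab$ and $ba$). The triple is $\tilde c$-defined if some single cyclic conjugate of $w$ admits application of both $r_1$ and $r_2$. For a word $w=x_1x_2\cdots x_k$ with letters $x_i\in\Sigma$, $\mathrm{pre}(w)=\{x_1,x_1x_2,\dots,x_1\cdots x_k\}$ (nonempty prefixes) and $\mathrm{suf}(w)=\{x_k,x_{k-1}x_k,\dots,x_1\cdots x_k\}$ (nonempty suffixes). *)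

From mathcomp Require Import all_boot.
From Stdlib Require Import Relations.
Set Implicit Arguments. Unset Strict Implicit. Unset Printing Implicit Defensive.

Section Rewriting.
Variable Sigma : finType.

(* A rule l -> r, with l the left-hand side (.1) and r the right-hand side (.2). *)
Definition rule := (seq Sigma * seq Sigma)%type.

Definition rewriting_system := rule -> Prop.

Definition rw_step (R : rewriting_system) (u v : seq Sigma) : Prop :=
  exists (x y : seq Sigma) (rl : rule), R rl /\ u = x ++ rl.1 ++ y /\ v = x ++ rl.2 ++ y.

Definition rw_star (R : rewriting_system) := clos_refl_trans (seq Sigma) (rw_step R).

Definition terminating (R : rewriting_system) : Prop :=
  well_founded (fun v u => rw_step R u v).

Definition confluent (R : rewriting_system) : Prop :=
  forall u v1 v2, rw_star R u v1 -> rw_star R u v2 ->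
    exists z, rw_star R v1 z /\ rw_star R v2 z.

Definition complete (R : rewriting_system) : Prop := terminating R /\ confluent R.

Definition applicable (rl : rule) (u : seq Sigma) : bool := infix rl.1 u.

(* cyclic conjugates of w are the rotations rot i w *)
Definition is_triple (R : rewriting_system) (w : seq Sigma) (r1 r2 : rule) : Prop :=
  R r1 /\ R r2 /\
  (exists i, applicable r1 (rot i w)) /\ (exists j, applicable r2 (rot j w)).

Definition ctilde_defined (w : seq Sigma) (r1 r2 : rule) : Prop :=
  exists i, applicable r1 (rot i w) && applicable r2 (rot i w).

Definition pre (u : seq Sigma) : pred (seq Sigma) := fun p => (p != [::]) && prefix p u.
Definition suf (u : seq Sigma) : pred (seq Sigma) := fun p => (p != [::]) && suffix p u.

Definition disjoint_pred (A B : pred (seq Sigma)) : Prop := forall p, ~ (A p && B p).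

End Rewriting.

From mathcomp Require Import all_boot.

(* Rotate w so that it ends with l1, giving v = x ++ y; every rotation of w is
   then y ++ x for some such split.  If l2 is a factor of y ++ x but of neither
   y nor x, it begins with a nonempty suffix s of v.  As s is not a suffix of
   l1, l1 is a suffix of s, hence a factor of l2, so the rotation containing
   l2 contains l1 too. *)

Section Words.
Variable T : eqType.
Implicit Types a b c d l s u w x y : seq T.

Lemma cat_eq_cat a b c d : a ++ b = c ++ d ->
  exists m, (a = c ++ m /\ d = m ++ b) \/ (c = a ++ m /\ b = m ++ d).
Proof.
elim: a c => [|x a IH] [|y c] /=.
- by move=> ->; exists [::]; right.
- by move=> ->; exists (y :: c); right.
- by move=> <-; exists (x :: a); left.
- by case=> -> /IH [m [[-> ->]|[-> ->]]]; exists m; [left|right].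
Qed.

Lemma suffix_cat_total s u l : suffix s (u ++ l) -> suffix s l || suffix l s.
Proof.
case/suffixP=> p /cat_eq_cat [m [[_ ->]|[_ ->]]].
- by rewrite suffix_suffix orbT.
- by rewrite suffix_suffix.
Qed.

Lemma infix_cat_cases l y x : infix l (y ++ x) ->
  [\/ infix l y, infix l x | exists2 s, s != [::] & prefix s l && suffix s y].
Proof.
case/infixP=> a [b /cat_eq_cat [m [[-> /esym]|[_ ->]]]]; last first.
  by constructor 2; apply: infix_infix.
case/cat_eq_cat=> m' [[-> _]|[-> ->]]; first by constructor 1; apply: infix_infix.
case: m => [|z m]; first by constructor 2; apply: prefix_infix.
by constructor 3; exists (z :: m); rewrite // prefix_prefix suffix_suffix.
Qed.

Lemma rot_of_rot w i j : exists k, rot i (rot j w) = rot k w.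
Proof. by rewrite rot_rot_add; eexists. Qed.

Lemma rot_to_rot w i j : exists k, rot i w = rot k (rot j w).
Proof. by rewrite -{1}(rotK j w) /rotr rot_rot_add; eexists. Qed.

Lemma infix_rot_suffix w l i : infix l (rot i w) -> exists k u, rot k w = u ++ l.
Proof.
case/infixP=> a [b wi]; have [k wk] := rot_of_rot w (size (a ++ l)) i.
by exists k, (b ++ a); rewrite -wk wi catA rot_size_cat catA.
Qed.

Lemma infix_rot_common w l1 l2 :
  (forall s, s != [::] -> prefix s l2 -> ~~ suffix s l1) ->
  (exists i, infix l1 (rot i w)) -> (exists j, infix l2 (rot j w)) ->
  exists i, infix l1 (rot i w) && infix l2 (rot i w).
Proof.
move=> D [i /infix_rot_suffix [k [u wk]]] [j l2j].
have l1k : infix l1 (rot k w) by rewrite wk suffix_infix.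
have [t wj] := rot_to_rot w j k.
move: (l2j); rewrite wj /rot => /infix_cat_cases [l2k | l2k | [s s0 /andP [s_l2 s_k]]].
- exists k; rewrite l1k; exact: infix_trans l2k (suffixW (suffix_drop _ _)).
- exists k; rewrite l1k; exact: infix_trans l2k (infix_take _ _).
have /suffix_cat_total /orP [s_l1 | l1_s] : suffix s (u ++ l1).
  by rewrite -wk (suffix_trans s_k (suffix_drop _ _)).
- by move: s_l1; rewrite (negPf (D s s0 s_l2)).
- exists j; rewrite l2j andbT; apply: infix_trans l2j.
  exact: infix_trans (suffixW l1_s) (prefixW s_l2).
Qed.

End Words.

Theorem lemma5p2 (Sigma : finType) (R : rewriting_system Sigma)
  (w : seq Sigma) (r1 r2 : rule Sigma) :
  complete R -> is_triple R w r1 r2 ->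
  disjoint_pred (pre r2.1) (suf r1.1) \/ disjoint_pred (pre r1.1) (suf r2.1) ->
  ctilde_defined w r1 r2.
Proof.
move=> _ [_ [_ [app1 app2]]]; rewrite /ctilde_defined /applicable.
have pre_suf (l l' : seq Sigma) : disjoint_pred (pre l) (suf l') ->
    forall s, s != [::] -> prefix s l -> ~~ suffix s l'.
  move=> D s s0 s_l; apply/negP=> s_l'.
  by apply: (D s); rewrite /pre /suf s0 s_l s_l'.
case=> /pre_suf D; first exact: infix_rot_common.
have [i both] := @infix_rot_common _ w _ _ D app2 app1.
by exists i; rewrite andbC.
Qed.
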